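(* Let $n$ items have positive integer sizes $w_1\le w_2\le\dots\le w_n$, with total size $W=\sum_{i=1}^n w_i$, and let there be $m$ bins, bin $j$ having positive integer capacity $C_j$, fixed cost $f_j\ge 0$ and unit cost $c_j\ge 0$, where $\sum_{j=1}^m C_j\ge W$. For each bin set $r_j=f_j/C_j+c_j$, let $a_1,\dots,a_m$ be a permutation of $\{1,\dots,m\}$ with $r_{a_1}\le r_{a_2}\le\dots\le r_{a_m}$, and let $k$ be the minimum integer such that $\sum_{j=1}^{k}C_{a_j}\ge W$. Define $$Lb_1=\sum_{j=1}^{k-1}C_{a_j}r_{a_j}+\Big(W-\sum_{j=1}^{k-1}C_{a_j}\Big)r_{a_k}.$$ Then $Lb_1$ equals the optimal value of the linear program $$\min \sum_{j=1}^m (f_jy_j+c_jl_j)$$ subject to $\sum_{j=1}^m x_{ij}=1$ for all $i\in\{1,\dots,n\}$; $\sum_{i=1}^n w_ix_{ij}=l_j$ for all $j\in\{1,\dots,m\}$; $l_j\le C_jy_j$ for all $j$; $0\le x_{ij}\le 1$, $0\le y_j\le 1$, $l_j\ge 0$ for all $i,j$.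
   Context: This linear program is the linear relaxation of an integer program for the Bin Packing with Usage Cost problem, in which each item is assigned to exactly one bin, the load $l_j$ of bin $j$ (total size of its items) may not exceed $C_j$, and a used bin $j$ costs $f_j+c_jl_j$; $y_j$ indicates whether bin $j$ is used and $x_{ij}$ whether item $i$ is in bin $j$. *)

From HB Require Import structures.
From mathcomp Require Import all_boot all_order all_algebra all_fingroup.
Set Implicit Arguments. Unset Strict Implicit. Unset Printing Implicit Defensive.
Import Order.TTheory GRing.Theory Num.Theory.
Local Open Scope ring_scope.

Definition total_size (n : nat) (w : 'I_n -> nat) : nat := (\sum_(i < n) w i)%N.

Definition bin_ratio (R : realFieldType) (m : nat) (C : 'I_m -> nat) (f c : 'I_m -> R)
  (j : 'I_m) : R := f j / (C j)%:R + c j.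

(* Lb_1, with kk the 0-based position of a_k in the sorted order (kk = k - 1) *)
Definition Lb1 (R : realFieldType) (n m : nat) (w : 'I_n -> nat) (C : 'I_m -> nat)
  (f c : 'I_m -> R) (a : {perm 'I_m}) (kk : 'I_m) : R :=
  \sum_(j < m | (j < kk)%N) (C (a j))%:R * bin_ratio C f c (a j)
  + ((total_size w)%:R - \sum_(j < m | (j < kk)%N) (C (a j))%:R)
      * bin_ratio C f c (a kk).

Definition lp_feasible (R : realFieldType) (n m : nat) (w : 'I_n -> nat)
  (C : 'I_m -> nat) (x : 'I_n -> 'I_m -> R) (y l : 'I_m -> R) : Prop :=
  (forall i, \sum_(j < m) x i j = 1) /\
  (forall j, \sum_(i < n) (w i)%:R * x i j = l j) /\
  (forall j, l j <= (C j)%:R * y j) /\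
  (forall i j, 0 <= x i j <= 1) /\
  (forall j, 0 <= y j <= 1) /\
  (forall j, 0 <= l j).

Definition lp_objective (R : realFieldType) (m : nat) (f c : 'I_m -> R)
  (y l : 'I_m -> R) : R := \sum_(j < m) (f j * y j + c j * l j).

From HB Require Import structures.
From mathcomp Require Import all_boot all_order all_algebra all_fingroup.
From mathcomp Require Import zify ring lra.
Set Implicit Arguments. Unset Strict Implicit. Unset Printing Implicit Defensive.
Import Order.TTheory GRing.Theory Num.Theory.
Local Open Scope ring_scope.

(* Since l_j <= C_j y_j and f_j >= 0, every feasible point costs at least
   sum_j r_j l_j, where the loads l_j lie in [0, C_j] and add up to W.  Over such
   loads sum_j r_j l_j is a fractional knapsack, minimised by filling the bins
   greedily in increasing order of r; that greedy load costs exactly Lb_1 and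
   extends to a feasible point (x_ij = l_j / W, y_j = l_j / C_j) of the same cost. *)

Section GreedyLoad.

Variables (R : realDomainType) (m : nat).
Variables (r cap : 'I_m -> R) (a : {perm 'I_m}) (kk : 'I_m).

Let prefix_cap : R := \sum_(p < m | (p < kk)%N) cap (a p).

Definition greedy_value (W : R) : R :=
  \sum_(p < m | (p < kk)%N) cap (a p) * r (a p) + (W - prefix_cap) * r (a kk).

Definition greedy_load (W : R) (j : 'I_m) : R :=
  let p := (a^-1 j)%g in
  if (p < kk)%N then cap j else if p == kk then W - prefix_cap else 0.

Lemma greedy_value_le_weighted_load (l : 'I_m -> R) :
  (forall p q : 'I_m, (p <= q)%N -> r (a p) <= r (a q)) ->
  (forall j, 0 <= l j <= cap j) ->
  greedy_value (\sum_j l j) <= \sum_j r j * l j.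
Proof.
move=> r_mono l_bounds; set rs := r (a kk).
rewrite [\sum_j l j](reindex_inj (@perm_inj _ a)).
rewrite [\sum_j r j * l j](reindex_inj (@perm_inj _ a)) /=.
have exchange : \sum_p (rs * l (a p)
      + (if (p < kk)%N then (r (a p) - rs) * cap (a p) else 0))
    <= \sum_p r (a p) * l (a p).
  apply: ler_sum => p _; have /andP [l_ge0 l_le_cap] := l_bounds (a p).
  case: ifP => hp.
    have : r (a p) <= rs by apply/r_mono/ltnW.
    by move=> r_le; nra.
  have : rs <= r (a p) by apply: r_mono; rewrite leqNgt hp.
  by move=> r_ge; nra.
apply: le_trans exchange.
rewrite big_split /= -mulr_sumr -big_mkcond /=.
under [X in _ <= _ + X]eq_bigr do rewrite mulrBl.
rewrite sumrB -mulr_sumr /greedy_value.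
under [X in X + _ <= _]eq_bigr do rewrite mulrC.
by rewrite /prefix_cap -/rs le_eqVlt; apply/orP; left; apply/eqP; ring.
Qed.

Section FixedTotal.

Variable W : R.

Lemma sum_greedy_load_weighted (F : 'I_m -> R) :
  \sum_j F j * greedy_load W j =
  \sum_(p < m | (p < kk)%N) F (a p) * cap (a p) + F (a kk) * (W - prefix_cap).
Proof.
rewrite (reindex_inj (@perm_inj _ a)) /= (bigID (fun p : 'I_m => (p < kk)%N)) /=.
congr (_ + _).
  by apply: eq_bigr => p hp; rewrite /greedy_load permK hp.
rewrite (bigD1 kk) /=; last by rewrite ltnn.
rewrite big1 ?addr0; first by rewrite /greedy_load permK ltnn eqxx.
move=> p /andP [hp p_neq]; rewrite /greedy_load permK (negbTE hp) (negbTE p_neq).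
exact: mulr0.
Qed.

Lemma sum_greedy_load : \sum_j greedy_load W j = W.
Proof.
under eq_bigr do rewrite -[greedy_load _ _]mul1r.
rewrite sum_greedy_load_weighted mul1r.
under eq_bigr do rewrite mul1r.
by rewrite -/prefix_cap addrC subrK.
Qed.

Lemma weighted_greedy_load : \sum_j r j * greedy_load W j = greedy_value W.
Proof.
rewrite sum_greedy_load_weighted /greedy_value mulrC.
by congr (_ + _); apply: eq_bigr => p _; rewrite mulrC.
Qed.

Lemma greedy_load_bounds :
  (forall j, 0 <= cap j) -> prefix_cap <= W <= prefix_cap + cap (a kk) ->
  forall j, 0 <= greedy_load W j <= cap j.
Proof.
move=> cap_ge0 /andP [prefix_le_W W_le] j; rewrite /greedy_load.
case: ifP => _; first by rewrite cap_ge0 lexx.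
case: eqP => [p_kk|_]; last by rewrite lexx cap_ge0.
have -> : j = a kk by rewrite -p_kk permKV.
by rewrite subr_ge0 prefix_le_W lerBlDl.
Qed.

End FixedTotal.

End GreedyLoad.

Section LinearRelaxation.

Variables (R : realFieldType) (n m : nat) (w : 'I_n -> nat) (C : 'I_m -> nat).
Hypothesis C_gt0 : forall j, (0 < C j)%N.

Let W : R := (total_size w)%:R.

Lemma lp_feasible_load_sum (x : 'I_n -> 'I_m -> R) (y l : 'I_m -> R) : lp_feasible w C x y l -> \sum_j l j = W.
Proof.
move=> [x_sum [l_def _]].
rewrite -(eq_bigr _ (fun j _ => l_def j)) exchange_big /=.
under eq_bigr do rewrite -mulr_sumr x_sum mulr1.
by rewrite /W /total_size natr_sum.
Qed.

Lemma lp_feasible_load_bounds (x : 'I_n -> 'I_m -> R) (y l : 'I_m -> R) :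
  lp_feasible w C x y l -> forall j, 0 <= l j <= (C j)%:R.
Proof.
move=> [_ [_ [l_le [_ [y_bounds l_ge0]]]]] j; rewrite l_ge0 /=.
apply: le_trans (l_le j) _; rewrite -[X in _ <= X]mulr1 ler_wpM2l ?ler0n //.
by case/andP: (y_bounds j).
Qed.

Lemma weighted_load_le_lp_objective (f c : 'I_m -> R) (x : 'I_n -> 'I_m -> R)
  (y l : 'I_m -> R) :
  (forall j, 0 <= f j) -> lp_feasible w C x y l ->
  \sum_j bin_ratio C f c j * l j <= lp_objective f c y l.
Proof.
move=> f_ge0 [_ [_ [l_le _]]]; apply: ler_sum => j _.
rewrite /bin_ratio mulrDl lerD2r -mulrA ler_wpM2l //.
by rewrite mulrC ler_pdivrMr ?ltr0n // mulrC.
Qed.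

Lemma lp_feasible_of_load (l : 'I_m -> R) :
  0 < W -> (forall j, 0 <= l j <= (C j)%:R) -> \sum_j l j = W ->
  lp_feasible w C (fun _ j => l j / W) (fun j => l j / (C j)%:R) l.
Proof.
move=> W_gt0 l_bounds l_sum.
have C_pos j : (0 : R) < (C j)%:R by rewrite ltr0n.
have l_ge0 j : 0 <= l j by case/andP: (l_bounds j).
have l_le_C j : l j <= (C j)%:R by case/andP: (l_bounds j).
have l_le_W j : l j <= W by rewrite -l_sum (bigD1 j) //= lerDl sumr_ge0.
split; first by move=> i; rewrite -mulr_suml l_sum divff ?gt_eqF.
split.
  move=> j; rewrite -mulr_suml -natr_sum -/(total_size w) -/W mulrCA.
  by rewrite divff ?gt_eqF // mulr1.
split; first by move=> j; rewrite mulrC -mulrA mulVf ?gt_eqF // mulr1.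
split; first by move=> i j; rewrite divr_ge0 ?ler_pdivrMr ?mul1r ?l_le_W ?(ltW W_gt0).
by split=> // j; rewrite divr_ge0 ?ler_pdivrMr ?mul1r ?l_le_C ?ler0n.
Qed.

Lemma lp_objective_of_load (f c l : 'I_m -> R) :
  lp_objective f c (fun j => l j / (C j)%:R) l = \sum_j bin_ratio C f c j * l j.
Proof.
apply: eq_bigr => j _; have : ((C j)%:R : R) != 0 by rewrite pnatr_eq0 -lt0n.
by move=> C_neq0; rewrite /bin_ratio; field.
Qed.

End LinearRelaxation.

Lemma big_ord_le_split (m : nat) (F : 'I_m -> nat) (k : 'I_m) :
  (\sum_(j < m | (j <= k)%N) F j = \sum_(j < m | (j < k)%N) F j + F k)%N.
Proof.
rewrite (bigD1 k) //= addnC; congr (_ + _).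
by apply: eq_bigl => j; rewrite ltn_neqAle andbC.
Qed.

Lemma sum_before_least_cover (m : nat) (F : 'I_m -> nat) (T : nat) (k : 'I_m) :
  (forall k' : 'I_m, (T <= \sum_(j < m | (j <= k')%N) F j)%N -> (k <= k')%N) ->
  (\sum_(j < m | (j < k)%N) F j <= T)%N.
Proof.
move=> least; have [k0|k_gt0] := posnP k.
  by rewrite big1 // => j; rewrite k0 ltn0.
have k1_lt : (k.-1 < m)%N by apply: leq_ltn_trans (leq_pred k) (ltn_ord k).
have prefix : (\sum_(j < m | (j <= Ordinal k1_lt)%N) F j = \sum_(j < m | (j < k)%N) F j)%N.
  by apply: eq_bigl => j /=; rewrite -ltnS prednK.
apply: ltnW; rewrite ltnNge; apply/negP => cover.
by have := least (Ordinal k1_lt); rewrite prefix => /(_ cover) /=; lia.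
Qed.

Theorem proposition2 (R : realFieldType) (n m : nat)
  (w : 'I_n -> nat) (C : 'I_m -> nat) (f c : 'I_m -> R)
  (a : {perm 'I_m}) (kk : 'I_m) :
  (0 < n)%N ->
  (forall i, (0 < w i)%N) ->
  (forall i j : 'I_n, (i <= j)%N -> (w i <= w j)%N) ->
  (forall j, (0 < C j)%N) ->
  (forall j, 0 <= f j) ->
  (forall j, 0 <= c j) ->
  (total_size w <= \sum_(j < m) C j)%N ->
  (forall i j : 'I_m, (i <= j)%N -> bin_ratio C f c (a i) <= bin_ratio C f c (a j)) ->
  (* k = kk + 1 is the minimum integer with sum_{j=1}^k C_{a_j} >= W *)
  (total_size w <= \sum_(j < m | (j <= kk)%N) C (a j))%N ->
  (forall k' : 'I_m, (total_size w <= \sum_(j < m | (j <= k')%N) C (a j))%N ->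
      (kk <= k')%N) ->
  (exists x y l, lp_feasible w C x y l /\ lp_objective f c y l = Lb1 w C f c a kk)
  /\ (forall x y l, lp_feasible w C x y l -> Lb1 w C f c a kk <= lp_objective f c y l).
Proof.
move=> n_gt0 w_gt0 _ C_gt0 f_ge0 _ _ r_mono cover least.
set r := bin_ratio C f c; set cap := fun j => (C j)%:R : R.
set W : R := (total_size w)%:R.
have Lb1_greedy : Lb1 w C f c a kk = greedy_value r cap a kk W by [].
split; last first.
  move=> x y l feas; rewrite Lb1_greedy /W -(lp_feasible_load_sum feas).
  apply: le_trans (weighted_load_le_lp_objective C_gt0 c f_ge0 feas).
  exact: greedy_value_le_weighted_load (lp_feasible_load_bounds feas).
have W_gt0 : 0 < W.
  rewrite ltr0n /total_size (bigD1 (Ordinal n_gt0)) //=.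
  exact: leq_trans (w_gt0 _) (leq_addr _ _).
have load_ok j : 0 <= greedy_load cap a kk W j <= cap j.
  apply: greedy_load_bounds => [i|]; first exact: ler0n.
  rewrite -natr_sum -natrD !ler_nat -big_ord_le_split cover andbT.
  exact: sum_before_least_cover least.
exists (fun _ j => greedy_load cap a kk W j / W),
  (fun j => greedy_load cap a kk W j / (C j)%:R), (greedy_load cap a kk W).
split; first by apply: (lp_feasible_of_load C_gt0) => //; exact: sum_greedy_load.
by rewrite lp_objective_of_load // weighted_greedy_load.
Qed.
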